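(* Let $T$ be an ergodic probability preserving transformation of a standard probability space $(X,\mathcal B,m)$, $G$ a locally compact second countable group, and $\varphi:X\to G$ measurable with $T_\varphi(x,g)=(Tx,\varphi(x)g)$ ergodic on $(X\times G,m\times m_G)$. Suppose $f(x,y)=f_0(x)\gamma(y)$, where $f_0:X\to\mathbb T$ is measurable and $\gamma:G\to\mathbb T$ is a continuous homomorphism, satisfies $f\circ T_\varphi=\lambda_0f$ a.e. for some $\lambda_0\in\mathbb T$. Then $\gamma\circ w=\gamma$ for all $w\in\mathcal E_\varphi$.
   Context: $m_G$ is left Haar measure. $\mathcal E_\varphi$ is the set of surjective continuous group endomorphisms $w$ of $G$ for which there exist a non-singular transformation $S$ of $X$ commuting with $T$ and a measurable $h:X\to G$ such that $Q(x,y)=(Sx,h(x)w(y))$ is a non-singular transformation of $X\times G$ commuting with $T_\varphi$. *)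

From HB Require Import structures.
From mathcomp Require Import all_boot all_order all_algebra.
From mathcomp Require Import all_classical all_reals all_analysis.
From mathcomp Require Import complex.
Set Implicit Arguments. Unset Strict Implicit. Unset Printing Implicit Defensive.
Import Order.TTheory GRing.Theory Num.Theory.
Local Open Scope classical_set_scope.
Local Open Scope ring_scope.

Notation Borel G := (g_sigma_algebraType (@open G)).

Definition is_lcsc_group (G : ptopologicalType)
    (mul : G -> G -> G) (inv : G -> G) (one : G) : Prop :=
  [/\ (forall a b c, mul a (mul b c) = mul (mul a b) c),
      (forall a, mul one a = a),
      (forall a, mul (inv a) a = one),
      (continuous (fun p : G * G => mul p.1 p.2) /\ continuous inv) &
      [/\ hausdorff_space G, locally_compact [set: G] & @second_countable G]].

Definition is_left_Haar (R : realType) (G : ptopologicalType)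
    (mul : G -> G -> G) (mG : set (Borel G) -> \bar R) : Prop :=
  [/\ (forall (g : G) (A : set (Borel G)), measurable A ->
         mG [set mul g y | y in A] = mG A),
      (forall K : set G, compact K -> (mG K < +oo)%E) &
      (forall U : set G, open U -> U !=set0 -> (0 < mG U)%E)].

(* Standard Borel space: Borel isomorphic to a Borel subset of the reals
   (Kuratowski's characterization). *)
Definition standard_borel d (X : measurableType d) (R : realType) : Prop :=
  exists e : X -> R, [/\ measurable_fun setT e, injective e,
     measurable (range e) &
     forall A : set X, measurable A -> measurable (e @` A)].

Definition measure_preserving d (X : measurableType d) (R : realType)
    (m : set X -> \bar R) (T : X -> X) : Prop :=
  measurable_fun setT T /\
  forall A : set X, measurable A -> m (T @^-1` A) = m A.

Definition ergodic d (X : measurableType d) (R : realType)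
    (m : set X -> \bar R) (T : X -> X) : Prop :=
  forall A : set X, measurable A -> T @^-1` A = A ->
    m A = 0%E \/ m (~` A) = 0%E.

Definition nonsingular d (X : measurableType d) (R : realType)
    (m : set X -> \bar R) (S : X -> X) : Prop :=
  measurable_fun setT S /\
  forall A : set X, measurable A -> (m (S @^-1` A) = 0%E <-> m A = 0%E).

Definition skew_product d (X : measurableType d) (G : ptopologicalType)
    (mul : G -> G -> G) (T : X -> X) (phi : X -> G) :
    X * Borel G -> X * Borel G :=
  fun p => (T p.1, (mul (phi p.1) p.2 : Borel G)).

Definition on_circle (R : realType) (z : R[i]) : Prop := `|z| = 1.

Definition measurable_C d (X : measurableType d) (R : realType)
    (f : X -> R[i]) : Prop :=
  measurable_fun setT (fun x => complex.Re (f x)) /\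
  measurable_fun setT (fun x => complex.Im (f x)).

Definition continuous_C (G : ptopologicalType) (R : realType)
    (f : G -> R[i]) : Prop :=
  continuous (fun x : G => (complex.Re (f x) : R^o)) /\
  continuous (fun x : G => (complex.Im (f x) : R^o)).

Definition E_phi d (X : measurableType d) (R : realType) (m : set X -> \bar R)
    (G : ptopologicalType) (mul : G -> G -> G) (mG : set (Borel G) -> \bar R)
    (T : X -> X) (phi : X -> G) (w : G -> G) : Prop :=
  [/\ continuous w, (forall a b, w (mul a b) = mul (w a) (w b)),
      (forall y : G, exists x : G, w x = y) &
      exists (S : X -> X) (h : X -> Borel G),
        [/\ nonsingular m S,
            {ae m, forall x, S (T x) = T (S x)},
            measurable_fun setT h &
            let Q := fun p : X * Borel G =>
                       (S p.1, (mul (h p.1) (w p.2) : Borel G)) in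
            (nonsingular (m \x mG)%E Q /\
            {ae (m \x mG)%E, forall p, Q (skew_product mul T phi p) =
                                       skew_product mul T phi (Q p)})]].

From HB Require Import structures.
From mathcomp Require Import all_boot all_order all_algebra.
From mathcomp Require Import all_classical all_reals all_analysis.
From mathcomp Require Import complex.
From mathcomp Require Import ring.
Import Order.TTheory GRing.Theory Num.Theory.
Local Open Scope classical_set_scope.
Local Open Scope ring_scope.

Set Implicit Arguments.
Unset Strict Implicit.
Unset Printing Implicit Defensive.

(* Let w be in E_phi, witnessed by S, h and Q(x, y) = (S x, h(x) w(y)), and
   put f(x, y) = f0(x) gamma(y).  Since f is an eigenfunction of T_phi, Q
   commutes with T_phi and Q preserves null sets, the function
   F = (f o Q) * conj f is T_phi-invariant.  T_phi preserves m x m_G by left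
   invariance of m_G, so by ergodicity F is a.e. equal to a constant c.  By
   Fubini there is an x such that F(x, y) = K * gamma(w y) * conj(gamma y)
   equals c for m_G-almost every y; both sides are continuous in y and m_G
   charges nonempty open sets, so equality holds for every y.  Taking y = 1
   gives K = c, hence gamma o w = gamma. *)

Section circle.
Variable R : realType.
Implicit Types a b z : R[i].

Lemma on_circleM a b : on_circle a -> on_circle b -> on_circle (a * b).
Proof. by rewrite /on_circle normrM => -> ->; rewrite mulr1. Qed.

Lemma on_circleJ a : on_circle a -> on_circle a^*.
Proof. by rewrite /on_circle norm_conjC. Qed.

Lemma on_circle_mulrJ a : on_circle a -> a * a^* = 1.
Proof. by rewrite /on_circle -normCK => ->; rewrite expr1n. Qed.

Lemma on_circle_neq0 a : on_circle a -> a != 0.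
Proof. by rewrite /on_circle -normr_eq0 => ->; rewrite oner_eq0. Qed.

Lemma on_circle_idem z : on_circle z -> z * z = z -> z = 1.
Proof.
by move=> /on_circle_neq0 z_neq0 zz; apply: (mulfI z_neq0); rewrite mulr1.
Qed.

Lemma on_circle_morph1 (G : Type) (mul : G -> G -> G) (one : G)
    (chi : G -> R[i]) :
  mul one one = one -> (forall g h, chi (mul g h) = chi g * chi h) ->
  on_circle (chi one) -> chi one = 1.
Proof.
by move=> one_idem chiM /on_circle_idem; apply; rewrite -chiM one_idem.
Qed.

Lemma on_circle_morph_eq_of_cst_ratio (G : Type) (mul : G -> G -> G) (one : G)
    (a b : G -> R[i]) (c : R[i]) :
  mul one one = one ->
  (forall g h, a (mul g h) = a g * a h) ->
  (forall g h, b (mul g h) = b g * b h) ->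
  (forall g, on_circle (a g)) -> (forall g, on_circle (b g)) ->
  (forall g, a g * (b g)^* = c) -> forall g, a g = b g.
Proof.
move=> one_idem aM bM a_circ b_circ ratio g.
have a1 := on_circle_morph1 one_idem aM (a_circ one).
have b1 := on_circle_morph1 one_idem bM (b_circ one).
have := ratio g; rewrite -(ratio one) a1 b1 conjC1 mulr1.
move=> /(congr1 ( *%R^~ (b g))); rewrite mul1r -mulrA [_^* * _]mulrC.
by rewrite on_circle_mulrJ ?mulr1.
Qed.

End circle.

Section complex_functions.
Import numFieldNormedType.Exports.
Variable R : realType.

Lemma Re_mulc (a b : R[i]) : complex.Re (a * b) =
  complex.Re a * complex.Re b - complex.Im a * complex.Im b.
Proof. by case: a => ? ?; case: b => ? ?. Qed.

Lemma Im_mulc (a b : R[i]) : complex.Im (a * b) =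
  complex.Re a * complex.Im b + complex.Im a * complex.Re b.
Proof. by case: a => ? ?; case: b => ? ?. Qed.

Lemma Re_conjc (a : R[i]) : complex.Re a^* = complex.Re a.
Proof. by case: a. Qed.

Lemma Im_conjc (a : R[i]) : complex.Im a^* = - complex.Im a.
Proof. by case: a. Qed.

Section measurable_C.
Context d (T : measurableType d).
Implicit Types f g : T -> R[i].

Lemma measurable_CM f g : measurable_C f -> measurable_C g ->
  measurable_C (fun x => f x * g x).
Proof.
move=> [mfr mfi] [mgr mgi]; split.
- under [X in measurable_fun _ X]funext => x do rewrite Re_mulc.
  apply: measurable_realfun.measurable_funB;
    exact: measurable_realfun.measurable_funM.
- under [X in measurable_fun _ X]funext => x do rewrite Im_mulc.
  apply: measurable_realfun.measurable_funD;
    exact: measurable_realfun.measurable_funM.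
Qed.

Lemma measurable_CJ f : measurable_C f -> measurable_C (fun x => (f x)^*).
Proof.
move=> [mfr mfi]; split.
- by under [X in measurable_fun _ X]funext => x do rewrite Re_conjc.
- under [X in measurable_fun _ X]funext => x do rewrite Im_conjc.
  exact: measurable_realfun.measurable_funN.
Qed.

Lemma measurable_C_comp d' (U : measurableType d') (h : U -> T) f :
  measurable_fun setT h -> measurable_C f -> measurable_C (f \o h).
Proof.
by move=> mh [mfr mfi]; split; [exact: measurableT_comp mfr mh|
                                exact: measurableT_comp mfi mh].
Qed.

End measurable_C.

Section continuous_C.
Context (G : ptopologicalType).
Implicit Types f g : G -> R[i].

Lemma continuous_CM f g : continuous_C f -> continuous_C g ->
  continuous_C (fun y => f y * g y).
Proof.
move=> [cfr cfi] [cgr cgi]; split => y.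
- rewrite (_ : (fun y => _) =
    (fun y => complex.Re (f y) : R^o) \* (fun y => complex.Re (g y) : R^o) -
    (fun y => complex.Im (f y) : R^o) \* (fun y => complex.Im (g y) : R^o)).
    apply: continuousB; apply: continuousM;
      [exact: cfr|exact: cgr|exact: cfi|exact: cgi].
  by apply/funext => z /=; rewrite Re_mulc.
- rewrite (_ : (fun y => _) =
    (fun y => complex.Re (f y) : R^o) \* (fun y => complex.Im (g y) : R^o) +
    (fun y => complex.Im (f y) : R^o) \* (fun y => complex.Re (g y) : R^o)).
    apply: continuousD; apply: continuousM;
      [exact: cfr|exact: cgi|exact: cfi|exact: cgr].
  by apply/funext => z /=; rewrite Im_mulc.
Qed.

Lemma continuous_CJ f : continuous_C f -> continuous_C (fun y => (f y)^*).
Proof.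
move=> [cfr cfi]; split => y.
- rewrite (_ : (fun y => _) = fun y => complex.Re (f y)); first exact: cfr.
  by apply/funext => z; rewrite Re_conjc.
- rewrite (_ : (fun y => _) = - (fun y => complex.Im (f y) : R^o)).
    exact/continuousN/cfi.
  by apply/funext => z /=; rewrite Im_conjc.
Qed.

Lemma continuous_C_cst (k : R[i]) : continuous_C (fun _ : G => k).
Proof. by split => y; exact: cvg_cst. Qed.

Lemma continuous_C_comp (w : G -> G) f : continuous w -> continuous_C f ->
  continuous_C (f \o w).
Proof.
move=> cw [cfr cfi]; split => y.
- exact: continuous_comp (cw y) (cfr (w y)).
- exact: continuous_comp (cw y) (cfi (w y)).
Qed.

Lemma open_continuous_C_neq f (c : R[i]) : continuous_C f ->
  open [set y | f y != c].
Proof.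
move=> [/continuousP cfr /continuousP cfi].
rewrite (_ : [set y | f y != c] =
  (fun y => complex.Re (f y) : R^o) @^-1` [set r | r != complex.Re c] `|`
  (fun y => complex.Im (f y) : R^o) @^-1` [set r | r != complex.Im c]).
  by apply: openU; [apply: cfr|apply: cfi]; exact: open_neq.
apply/seteqP; split => y /=; case: (f y) c => [a b] [a' b'] /=.
  by rewrite eq_complex negb_and => /orP[]; [left|right].
by case=> /eqP neq; apply/eqP => -[].
Qed.

Lemma continuous_Borel_measurable (k : G -> R) :
  continuous (k : G -> R^o) -> measurable_fun setT (k : Borel G -> R).
Proof.
move=> /continuousP ck.
apply: (measurability _ (measurable_realfun.RGenOpens.measurableE R)).
move=> _ [_ [a [b ->]] <-]; rewrite setTI; apply: sub_sigma_algebra.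
exact/ck/interval_open.
Qed.

Lemma continuous_C_measurable f :
  continuous_C f -> measurable_C (f : Borel G -> R[i]).
Proof. by move=> [cfr cfi]; split; exact: continuous_Borel_measurable. Qed.

End continuous_C.

End complex_functions.

Section zero_one_law.
Context d (P : measurableType d) (R : realType).
Variable mu : {measure set P -> \bar R}.
Variable u : P -> R.
Hypothesis zero_one : forall r,
  mu.-negligible [set p | u p < r] \/ mu.-negligible [set p | r <= u p].

Let sublevel_negligible_le r s : s <= r ->
  mu.-negligible [set p | u p < r] -> mu.-negligible [set p | u p < s].
Proof. by move=> sr; apply: negligibleS => p /= /lt_le_trans; apply. Qed.

Lemma zero_one_has_sup : ~ mu.-negligible setT ->
  has_sup [set r | mu.-negligible [set p | u p < r]].
Proof.
move=> PT0; have u_bounded p : exists n : nat, `|u p| < n%:R.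
  by exists (Num.bound `|u p|); apply: archi_boundP.
split.
  apply: contrapT => /forallNP noS; apply: PT0.
  apply: (@negligibleS _ _ _ _ (\bigcup_n [set p | - n%:R <= u p])).
    move=> p _; have [n un] := u_bounded p; exists n => //=.
    by move: un; rewrite ltr_norml => /andP[/ltW].
  by apply: negligible_bigcup => n; have [/noS|] := zero_one (- n%:R).
have [[n nS]|allS] :=
  pselect (exists n : nat, ~ mu.-negligible [set p | u p < n%:R]).
  exists n%:R => s Ss; rewrite leNgt; apply/negP => /ltW ns.
  exact/nS/(sublevel_negligible_le ns).
exfalso; apply: PT0.
apply: (@negligibleS _ _ _ _ (\bigcup_n [set p | u p < n%:R])).
  move=> p _; have [n un] := u_bounded p; exists n => //=.
  by move: un; rewrite ltr_norml => /andP[].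
by apply: negligible_bigcup => n; apply: contrapT => nS; apply: allS; exists n.
Qed.

Lemma zero_one_ae_cst : exists c, {ae mu, forall p, u p = c}.
Proof.
have [PT0|PT0] := pselect (mu.-negligible setT).
  by exists 0; apply: negligibleS PT0.
pose S := [set r | mu.-negligible [set p | u p < r]].
have supS : has_sup S := zero_one_has_sup PT0.
have below k : mu.-negligible [set p | u p < sup S - k.+1%:R^-1].
  have k_gt0 : 0 < k.+1%:R^-1 :> R by rewrite invr_gt0.
  have [s Ss lts] := sup_adherent k_gt0 supS.
  exact: sublevel_negligible_le (ltW lts) Ss.
have above k : mu.-negligible [set p | sup S + k.+1%:R^-1 <= u p].
  have [Sk|//] := zero_one (sup S + k.+1%:R^-1).
  have := sup_upper_bound supS Sk; rewrite leNgt => /negP; elim.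
  by rewrite ltrDl invr_gt0 ltr0Sn.
exists (sup S).
apply: negligibleS (negligibleU (negligible_bigcup below)
                               (negligible_bigcup above)) => p /= /eqP.
rewrite neq_lt => /orP[/ltr_add_invr[k ltk]|/ltr_add_invr[k ltk]].
  by left; exists k => //=; rewrite ltrBrDr.
by right; exists k => //=; rewrite ltW.
Qed.

End zero_one_law.

Lemma measurable_preimage d1 d2 (T1 : measurableType d1)
    (T2 : measurableType d2) (f : T1 -> T2) (A : set T2) :
  measurable_fun setT f -> measurable A -> measurable (f @^-1` A).
Proof. by move=> mf mA; rewrite -[_ @^-1` _]setTI; exact: mf. Qed.

Definition null_preserving d (P : measurableType d) (R : realType)
    (mu : set P -> \bar R) (Q : P -> P) :=
  forall A, measurable A -> mu A = 0%E -> mu (Q @^-1` A) = 0%E.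

Lemma nonsingular_null_preserving d (P : measurableType d) (R : realType)
    (mu : set P -> \bar R) (Q : P -> P) :
  nonsingular mu Q -> null_preserving mu Q.
Proof. by move=> [_ Q_ns] A mA /(Q_ns A mA). Qed.

Section ergodic_invariant.
Context d (P : measurableType d) (R : realType).
Variable mu : {measure set P -> \bar R}.
Variable Tf : P -> P.
Hypothesis mTf : measurable_fun setT Tf.
Hypothesis Tf_null : null_preserving mu Tf.
Hypothesis Tf_ergodic : ergodic mu Tf.

Lemma measurable_iter n : measurable_fun setT (iter n Tf).
Proof.
by elim: n => [|n IHn] /=; [exact: measurable_id|exact: measurableT_comp].
Qed.

Lemma null_preserving_iter n : null_preserving mu (iter n Tf).
Proof.
elim: n => [//|n IHn] A mA A0.
rewrite (_ : _ @^-1` _ = Tf @^-1` (iter n Tf @^-1` A)); last first.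
  by apply/seteqP; split => p; rewrite /preimage /= -iterS iterSr.
apply: Tf_null; last exact: IHn.
exact: measurable_preimage (measurable_iter n) mA.
Qed.

Lemma ergodic_ae_invariant_set (E : set P) : measurable E ->
  {ae mu, forall p, E (Tf p) = E p} ->
  mu.-negligible E \/ mu.-negligible (~` E).
Proof.
move=> mE [N [mN N0 NE]].
pose Z := \bigcup_n (iter n Tf @^-1` N).
have Z_null : mu.-negligible Z.
  apply: negligible_bigcup => n; exists (iter n Tf @^-1` N); split => //.
    exact: measurable_preimage (measurable_iter n) mN.
  exact: null_preserving_iter.
have E_orbit p : ~ Z p -> forall n, E (iter n Tf p) = E p.
  move=> Zp; elim=> [//|n IHn]; rewrite iterS -IHn.
  by apply: contrapT => nE; apply: Zp; exists n => //; apply: NE.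
(* [ergodic] only concerns strictly invariant sets: pass to the points whose
   orbit eventually stays in E. *)
pose A := \bigcup_n \bigcap_k (iter (k + n) Tf @^-1` E).
have mA : measurable A.
  apply: bigcupT_measurable => n; apply: bigcapT_measurable => k.
  exact: measurable_preimage (measurable_iter _) mE.
have A_inv : Tf @^-1` A = A.
  apply/seteqP; split => p [n _ An].
    by exists n.+1 => // k _; rewrite /= addnS iterSr; exact: (An k).
  by exists n => // k _; rewrite /= -iterSr -addSn; exact: (An k.+1).
have [A0|CA0] := Tf_ergodic mA A_inv.
  left; apply: (@negligibleS _ _ _ _ (A `|` Z)); last first.
    by apply: negligibleU => //; exists A; split.
  move=> p Ep; have [Zp|Zp] := pselect (Z p); [by right|left].
  by exists 0%N => // k _; rewrite /= addn0 E_orbit.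
right; apply: (@negligibleS _ _ _ _ (~` A `|` Z)); last first.
  by apply: negligibleU => //; exists (~` A); split => //; exact: measurableC.
move=> p Ep; have [Zp|Zp] := pselect (Z p); [by right|left].
by move=> [n _ An]; apply: Ep; rewrite -(E_orbit _ Zp n) -[n]add0n; exact: An.
Qed.

Lemma ergodic_invariant_ae_cst (u : P -> R) : measurable_fun setT u ->
  {ae mu, forall p, u (Tf p) = u p} -> exists c, {ae mu, forall p, u p = c}.
Proof.
move=> mu_ u_inv; apply: zero_one_ae_cst => r.
have mE : measurable [set p | u p < r].
  rewrite (_ : [set p | _] = u @^-1` `]-oo, r[); last first.
    by apply/seteqP; split => p /=; rewrite in_itv.
  exact: measurable_preimage mu_ (measurable_itv _).
rewrite (_ : [set p | r <= u p] = ~` [set p | u p < r]); last first.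
  by apply/seteqP; split => p /=; rewrite leNgt => /negP.
apply: ergodic_ae_invariant_set mE _.
by apply: filterS u_inv => p /= ->.
Qed.

Lemma ergodic_invariantC_ae_cst (F : P -> R[i]) : measurable_C F ->
  {ae mu, forall p, F (Tf p) = F p} -> exists c, {ae mu, forall p, F p = c}.
Proof.
move=> [mRe mIm] F_inv.
have [c1 Fc1] : exists c, {ae mu, forall p, complex.Re (F p) = c}.
  by apply: ergodic_invariant_ae_cst mRe _; apply: filterS F_inv => p ->.
have [c2 Fc2] : exists c, {ae mu, forall p, complex.Im (F p) = c}.
  by apply: ergodic_invariant_ae_cst mIm _; apply: filterS F_inv => p ->.
exists (Complex c1 c2); apply: filterS2 Fc1 Fc2 => p.
by case: (F p) => a b /= -> ->.
Qed.

End ergodic_invariant.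

Section Borel.
Context (G : ptopologicalType).

Lemma open_measurable_Borel (U : set G) :
  open U -> measurable (U : set (Borel G)).
Proof. exact: sub_sigma_algebra. Qed.

Lemma closed_measurable_Borel (U : set G) :
  closed U -> measurable (U : set (Borel G)).
Proof.
move=> cU; rewrite -[U]setCK; apply: measurableC; apply: open_measurable_Borel.
by rewrite openC.
Qed.

Lemma second_countable_nat_basis : @second_countable G ->
  exists g : nat -> set G, forall (x : G) (N : set G), nbhs x N ->
    exists i, [/\ open (g i), g i x & g i `<=` N].
Proof.
move=> [B cB [Bo Bb]]; have [g gB] := pcard_surjP cB.
exists g => x N xN; have [U [BU Ux] UN] := Bb x N xN.
by have [i _ giU] := gB U BU; exists i; rewrite giU; split => //; exact: Bo.
Qed.

Lemma locally_compact_sigma_finite (R : realType)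
    (mu : {measure set (Borel G) -> \bar R}) :
  @second_countable G -> locally_compact [set: G] ->
  (forall K : set G, compact K -> (mu K < +oo)%E) -> sigma_finite setT mu.
Proof.
move=> /second_countable_nat_basis[g gB] lcG mu_fin.
pose relcompact i :=
  open (g i) /\ exists2 K, compact K & closed K /\ g i `<=` K.
exists (fun i => if pselect (relcompact i) then g i : set (Borel G) else set0).
  apply/seteqP; split => [x _|//].
  have [K xK [cK cloK]] := lcG x I.
  have [i [oi gix giK]] : exists i, [/\ open (g i), g i x & g i `<=` K].
    by apply: gB; move: xK; apply: (@filterS _ (nbhs x)) => y; apply.
  exists i => //; case: (pselect (relcompact i)) => [//|nrc]; apply: nrc.
  by split => //; exists K.
move=> i.
destruct (pselect (relcompact i)) as [[oi [K cK [cloK giK]]]|nrc]; last first.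
  by split; [exact: measurable0|rewrite measure0].
split; first exact: open_measurable_Borel.
apply: le_lt_trans (mu_fin K cK); apply: le_measure => //; rewrite inE.
  exact: open_measurable_Borel.
exact: closed_measurable_Borel.
Qed.

End Borel.

Lemma open_measurable_BorelX (G1 G2 : ptopologicalType) (W : set (G1 * G2)) :
  @second_countable G1 -> @second_countable G2 -> open W ->
  measurable (W : set (Borel G1 * Borel G2)).
Proof.
move=> /second_countable_nat_basis[g1 g1B] /second_countable_nat_basis[g2 g2B].
move=> oW.
pose C i j := [/\ open (g1 i), open (g2 j) & g1 i `*` g2 j `<=` W].
suff -> : (W : set (Borel G1 * Borel G2)) =
    \bigcup_i \bigcup_(j in C i) (g1 i `*` g2 j : set (Borel G1 * Borel G2)).
  apply: bigcupT_measurable => i; apply: bigcup_measurable => j [oi oj _].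
  by apply: measurableX; exact: open_measurable_Borel.
apply/seteqP; split => -[x y]; last by move=> [i _ [j [_ _ W12]]]; apply: W12.
move=> Wxy; have [[N1 N2] [/= xN1 yN2] N12W] : nbhs (x, y) W.
  by move: oW; rewrite openE; apply.
have [i [oi g1ix g1iN1]] := g1B _ _ xN1.
have [j [oj g2jy g2jN2]] := g2B _ _ yN2.
exists i => //; exists j => //; split => // -[a b] [/= ai bj].
by apply: N12W; split; [exact: g1iN1|exact: g2jN2].
Qed.

Lemma continuous_measurable_BorelX (G1 G2 K : ptopologicalType)
    (f : G1 * G2 -> K) :
  @second_countable G1 -> @second_countable G2 -> continuous f ->
  measurable_fun setT (f : Borel G1 * Borel G2 -> Borel K).
Proof.
move=> sc1 sc2 /continuousP cf.
apply: (@measurability _ _ _ (Borel K) setT _ (@open K) erefl).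
move=> _ [U oU <-]; rewrite setTI.
exact: open_measurable_BorelX (cf _ oU).
Qed.

Definition sigma_finite_measure_of d (T : measurableType d) (R : realType)
    (mu : {measure set T -> \bar R}) (mu_sf : sigma_finite setT mu) :
    {sigma_finite_measure set T -> \bar R} :=
  HB.pack_for (sigma_finite_measure T R) (Measure.sort mu)
    (isSFinite.Build _ _ _ (Measure.sort mu)
      (sfinite_measure_sigma_finite mu_sf))
    (isSigmaFinite.Build _ _ _ (Measure.sort mu) mu_sf).

Section skew_product.
Context (R : realType) d (X : measurableType d) (G : ptopologicalType)
  (mul : G -> G -> G) (inv : G -> G) (one : G).
Hypothesis G_group : is_lcsc_group mul inv one.

Let mulA a b c : mul a (mul b c) = mul (mul a b) c.
Proof. by case: G_group. Qed.
Let mul1g a : mul one a = a. Proof. by case: G_group. Qed.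
Let mulVg a : mul (inv a) a = one. Proof. by case: G_group. Qed.

Let mulgV a : mul a (inv a) = one.
Proof.
rewrite -[mul a (inv a)]mul1g -[X in mul X _](mulVg (inv a)) -mulA.
by rewrite [mul (inv a) (mul a _)]mulA mulVg mul1g mulVg.
Qed.

Lemma preimage_mul_left a (A : set G) :
  mul a @^-1` A = [set mul (inv a) z | z in A].
Proof.
apply/seteqP; split => y /=.
  by move=> Aay; exists (mul a y) => //; rewrite mulA mulVg mul1g.
by move=> [z Az <-]; rewrite mulA mulgV mul1g.
Qed.

Lemma measurable_skew_product (T : X -> X) (phi : X -> Borel G) :
  measurable_fun setT T -> measurable_fun setT phi ->
  measurable_fun setT (skew_product mul T phi).
Proof.
move=> mT mphi; have [_ _ _ [cmul _] [_ _ scG]] := G_group.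
apply/measurable_fun_pairP; split.
  exact: measurableT_comp mT measurable_fst.
have mpair : measurable_fun setT
    (fun p : X * Borel G => (phi p.1, p.2) : Borel G * Borel G).
  apply/measurable_fun_pairP; split; last exact: measurable_snd.
  exact: measurableT_comp mphi measurable_fst.
exact: measurableT_comp (continuous_measurable_BorelX scG scG cmul) mpair.
Qed.

Lemma skew_product_preserving (m : {measure set X -> \bar R})
    (mG : {sigma_finite_measure set (Borel G) -> \bar R})
    (T : X -> X) (phi : X -> Borel G) :
  is_left_Haar mul mG -> measure_preserving m T ->
  forall A, measurable A ->
    (m \x mG)%E (skew_product mul T phi @^-1` A) = (m \x mG)%E A.
Proof.
move=> [mG_inv _ _] [mT mpT] A mA.
transitivity (\int[m]_(x in T @^-1` setT) ((mG \o xsection A) \o T) x)%E.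
  rewrite preimage_setT; apply: eq_integral => x _ /=.
  rewrite (_ : xsection _ x = mul (phi x) @^-1` xsection A (T x)).
    by rewrite preimage_mul_left mG_inv //; exact: measurable_xsection.
  by apply/seteqP; split => y; rewrite /xsection /= !inE.
rewrite -ge0_integral_pushforward //; last exact: measurable_fun_xsection.
by apply: eq_measure_integral => B mB _ /=; exact: mpT.
Qed.

Lemma skew_product_invariantC_ae_cst (m : {measure set X -> \bar R})
    (mG : {sigma_finite_measure set (Borel G) -> \bar R})
    (T : X -> X) (phi : X -> Borel G) (F : X * Borel G -> R[i]) :
  is_left_Haar mul mG -> measure_preserving m T -> measurable_fun setT phi ->
  ergodic (m \x mG)%E (skew_product mul T phi) -> measurable_C F ->
  {ae (m \x mG)%E, forall p, F (skew_product mul T phi p) = F p} ->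
  exists c, {ae (m \x mG)%E, forall p, F p = c}.
Proof.
move=> G_Haar T_preserving mphi Tphi_ergodic; apply: ergodic_invariantC_ae_cst.
- have mT : measurable_fun setT T by case: T_preserving.
  exact: (measurable_skew_product mT mphi : measurable_fun _ _).
- move=> A mA A0; rewrite -[RHS]A0.
  exact: skew_product_preserving.
- exact: Tphi_ergodic.
Qed.

End skew_product.

Lemma ae_section d1 d2 (T1 : measurableType d1) (T2 : measurableType d2)
    (R : realType) (m1 : {measure set T1 -> \bar R})
    (m2 : {sigma_finite_measure set T2 -> \bar R}) (Pr : T1 * T2 -> Prop) :
  (m1 setT != 0)%E -> {ae (m1 \x m2)%E, forall p, Pr p} ->
  exists x, {ae m2, forall y, Pr (x, y)}.
Proof.
move=> m1T [N [mN N0 PrN]].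
have [x Nx0] : exists x, m2 (xsection N x) = 0%E.
  apply: contrapT => /forallNP secN.
  have m2N := measurable_fun_xsection m2 mN.
  have /(ae_eq_integral_abs m1 measurableT m2N).1 :
      (\int[m1]_x `|m2 (xsection N x)| = 0)%E.
    by rewrite -N0; apply: eq_integral => x _; rewrite gee0_abs.
  move=> [M [mM M0 secM]]; move: m1T; rewrite -M0 (_ : setT = M) ?eqxx //.
  apply/seteqP; split => // x _; apply: secM => /= Nx0.
  by apply: (secN x); exact: Nx0.
exists x, (xsection N x); split => //; first exact: measurable_xsection.
by move=> y /= nPr; rewrite /xsection /= inE; exact: PrN.
Qed.

Lemma continuous_C_ae_cst (R : realType) (G : ptopologicalType)
    (mG : {measure set (Borel G) -> \bar R}) (k : G -> R[i]) (c : R[i]) :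
  (forall U : set G, open U -> U !=set0 -> (0 < mG U)%E) -> continuous_C k ->
  {ae mG, forall y, k y = c} -> forall y, k y = c.
Proof.
move=> mG_pos ck [N [mN N0 kN]] y; apply: contrapT => /eqP kyc.
have oU := open_continuous_C_neq c ck.
have : (0 < mG [set y | k y != c])%E by apply: mG_pos => //; exists y.
suff -> : mG [set y | k y != c] = 0%E by rewrite ltxx.
apply/eqP; rewrite eq_le measure_ge0 andbT -N0 le_measure ?inE //.
  exact: open_measurable_Borel.
by move=> z /= /eqP kzc; apply: kN.
Qed.

Section eigenfunction_ratio.
Context d (P : measurableType d) (R : realType).
Variable mu : {measure set P -> \bar R}.

Lemma ae_comp_null_preserving (Q : P -> P) (Pr : P -> Prop) :
  measurable_fun setT Q -> null_preserving mu Q ->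
  {ae mu, forall p, Pr p} -> {ae mu, forall p, Pr (Q p)}.
Proof.
move=> mQ Q_null [N [mN N0 PrN]]; exists (Q @^-1` N); split.
- exact: measurable_preimage.
- exact: Q_null.
- by move=> p /= nPr; apply: PrN.
Qed.

Lemma eigenfunction_ratio_ae_invariant (Tf Q : P -> P) (f : P -> R[i])
    (lambda : R[i]) :
  measurable_fun setT Q -> null_preserving mu Q -> on_circle lambda ->
  {ae mu, forall p, f (Tf p) = lambda * f p} ->
  {ae mu, forall p, Q (Tf p) = Tf (Q p)} ->
  {ae mu, forall p, f (Q (Tf p)) * (f (Tf p))^* = f (Q p) * (f p)^*}.
Proof.
move=> mQ Q_null lambda_circ f_eigen QT.
apply: filterS3 f_eigen QT (ae_comp_null_preserving mQ Q_null f_eigen).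
move=> p fT QTp fQT.
by rewrite QTp fQT fT rmorphM mulrACA on_circle_mulrJ // mul1r.
Qed.

End eigenfunction_ratio.

Theorem lemma2p3 (R : realType) (d : measure_display) (X : measurableType d)
  (m : probability X R) (T : X -> X)
  (G : ptopologicalType) (mul : G -> G -> G) (inv : G -> G) (one : G)
  (mG : {measure set (Borel G) -> \bar R}) (phi : X -> Borel G)
  (f0 : X -> R[i]) (gamma : G -> R[i]) (lambda0 : R[i]) :
  standard_borel X R ->
  measure_preserving m T -> ergodic m T ->
  is_lcsc_group mul inv one -> is_left_Haar mul mG ->
  measurable_fun setT phi ->
  ergodic (m \x mG)%E (skew_product mul T phi) ->
  measurable_C f0 -> (forall x, on_circle (f0 x)) ->
  continuous_C gamma -> (forall g, on_circle (gamma g)) ->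
  (forall a b, gamma (mul a b) = gamma a * gamma b) ->
  on_circle lambda0 ->
  {ae (m \x mG)%E, forall p : (X * Borel G)%type,
     f0 (skew_product mul T phi p).1 * gamma (skew_product mul T phi p).2 =
     lambda0 * (f0 p.1 * gamma p.2)} ->
  forall w : G -> G, E_phi m mul mG T phi w -> forall g : G, gamma (w g) = gamma g.
Proof.
move=> _ T_preserving _ G_group G_Haar mphi Tphi_ergodic mf0 f0_circ cgamma
  gamma_circ gammaM lambda0_circ f_eigen w [cw wM _ [S [h [_ _ _ [Q_ns QT]]]]]
  g.
have [_ mul1g _ _ [_ lcG scG]] := G_group.
have [_ mG_fin mG_pos] := G_Haar.
pose mGs := sigma_finite_measure_of
  (locally_compact_sigma_finite scG lcG mG_fin).
pose f (p : X * Borel G) := f0 p.1 * gamma p.2.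
have mf : measurable_C f.
  apply: measurable_CM; first exact: measurable_C_comp measurable_fst mf0.
  exact: measurable_C_comp measurable_snd (continuous_C_measurable cgamma).
pose Q (p : X * Borel G) := (S p.1, mul (h p.1) (w p.2) : Borel G).
have Q_null : null_preserving (m \x mGs)%E Q.
  exact: nonsingular_null_preserving Q_ns.
have [c Fc] : exists c, {ae (m \x mGs)%E, forall p, f (Q p) * (f p)^* = c}.
  apply: (skew_product_invariantC_ae_cst (mG := mGs) (T := T) (phi := phi)
    G_group G_Haar T_preserving mphi Tphi_ergodic).
    exact: measurable_CM (measurable_C_comp Q_ns.1 mf) (measurable_CJ mf).
  exact: eigenfunction_ratio_ae_invariant Q_ns.1 Q_null lambda0_circ f_eigen QT.
have m_neq0 : (m setT != 0)%E by rewrite probability_setT eqe oner_eq0.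
have [x Fxc] := ae_section m_neq0 Fc.
pose K := f0 (S x) * gamma (h x) * (f0 x)^*.
have Kc : forall y, K * (gamma (w y) * (gamma y)^*) = c.
  apply: (continuous_C_ae_cst (k := fun y => K * (gamma (w y) * (gamma y)^*))
    mG_pos).
    apply: continuous_CM; first exact: continuous_C_cst.
    exact: continuous_CM (continuous_C_comp cw cgamma) (continuous_CJ cgamma).
  by apply: filterS Fxc => y <-; rewrite /f /Q /K /= gammaM !rmorphM; ring.
have K_neq0 : K != 0.
  by apply/on_circle_neq0/on_circleM; [apply: on_circleM|apply: on_circleJ].
apply: (on_circle_morph_eq_of_cst_ratio (a := gamma \o w) (c := c / K)
  (mul1g one) _ gammaM _ gamma_circ _ g) => [g1 g2|y|y] /=.
- by rewrite wM gammaM.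
- exact: gamma_circ.
- by rewrite -(Kc y) [RHS]mulrC mulKf.
Qed.
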